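(* Let $G$ be a graph, $t\in\mathbb N$, and let $I_t=I_t^{(\mathcal P)}(G)$ for $\mathcal P\in\{push,pull,pp\}$. Then, conditional on $I_t$, there exist $m\in\mathbb N$, independent random variables $X_1,\dots,X_m$ and a self-bounding function $f=f^{(\mathcal P)}$ such that $|I_{t+1}|=f(X_1,\dots,X_m)$.
   Context: Rumour spreading protocols on a graph $G$ in synchronous rounds. push: every informed vertex chooses a neighbour independently and uniformly at random (iuar) and informs it. pull: every uninformed vertex chooses a neighbour iuar and becomes informed if that neighbour is informed. push\&pull (pp): every vertex chooses a neighbour iuar and if one of the two is informed both become informed. $I_t^{(\mathcal P)}(G)$ is the set of vertices informed at the beginning of round $t$. A non-negative function $f:X^m\to\mathbb R$ is self-bounding if there exist functions $f_i:X^{m-1}\to\mathbb R$ such that for all $x_1,\dots,x_m\in X$ and all $i$, $0\le f(x_1,\dots,x_m)-f_i(x_1,\dots,x_{i-1},x_{i+1},\dots,x_m)\le1$, and $\sum_{i=1}^m\big(f(x_1,\dots,x_m)-f_i(x_1,\dots,x_{i-1},x_{i+1},\dots,x_m)\big)\le f(x_1,\dots,x_m)$. *)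

From mathcomp Require Import all_boot all_order all_algebra.
Set Implicit Arguments. Unset Strict Implicit. Unset Printing Implicit Defensive.
Import Order.TTheory GRing.Theory Num.Theory.
Local Open Scope ring_scope.

Inductive protocol := Push | Pull | PushPull.

Section Round.
Variables (R : realFieldType) (V : finType) (e : rel V).

Definition nbhd (v : V) : {set V} := [set w | e v w].

(* Probability that vertex v chooses u in one round: uniform over the
   neighbours of v; an isolated vertex (no choice possible) is modelled as
   "choosing itself", which has no effect in any of the protocols. *)
Definition choice_prob (v u : V) : R :=
  if #|nbhd v| == 0%N then (u == v)%:R
  else (e v u)%:R / #|nbhd v|%:R.

Definition outcome := {ffun V -> V}.

Definition weight (w : outcome) : R := \prod_(v : V) choice_prob v (w v).

Definition prob (A : pred outcome) : R := \sum_(w : outcome | A w) weight w.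

Definition next_informed (P : protocol) (S : {set V}) (w : outcome) : {set V} :=
  match P with
  | Push => S :|: [set u | [exists v in S, w v == u]]
  | Pull => S :|: [set u | w u \in S]
  | PushPull => S :|: [set u | (w u \in S) || [exists v in S, w v == u]]
  end.

Definition mutually_independent (X : finType) (m : nat)
    (Xs : 'I_m -> outcome -> X) : Prop :=
  forall (J : {set 'I_m}) (A : 'I_m -> {set X}),
    prob [pred w | [forall i in J, Xs i w \in A i]]
    = \prod_(i in J) prob [pred w | Xs i w \in A i].

End Round.

(* Self-bounding function f : X^m -> R.  A function f_i of the m-1
   coordinates other than i is represented as a function of all m
   coordinates that does not depend on coordinate i. *)
Definition self_bounding (R : realFieldType) (X : Type) (m : nat)
    (f : ('I_m -> X) -> R) : Prop :=
  (forall x, 0 <= f x) /\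
  exists fi : 'I_m -> ('I_m -> X) -> R,
    (forall i x y, (forall j, j != i -> x j = y j) -> fi i x = fi i y) /\
    (forall x i, 0 <= f x - fi i x <= 1) /\
    (forall x, \sum_(i < m) (f x - fi i x) <= f x).

(* A round is determined by the independent choices (w v)_v of the vertices, and
   the informed set after it is S ∪ ⋃_v C_v(w v), where C_v(x) is the set of
   vertices informed through the contact of v with x; C_v(x) contains at most
   one vertex outside S.  For any such family, x ↦ |S ∪ ⋃_i C_i(x_i)| is
   self-bounding, with f_i the size of the union without the i-th term: a
   vertex lost by dropping term i lies in C_i and in no other term, so at most
   one vertex is lost per coordinate and the lost sets are pairwise disjoint
   subsets of the union. *)

From mathcomp Require Import all_boot all_order all_algebra.
Import Order.TTheory GRing.Theory Num.Theory.

Lemma sum_card_disjoint_le (T I : finType) (A : {set T}) (D : I -> {set T}) :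
    (forall i, D i \subset A) ->
    (forall i j u, u \in D i -> u \in D j -> i = j) ->
  \sum_i #|D i| <= #|A|.
Proof.
move=> subDA disjD.
have cardD i : #|D i| = \sum_u (u \in D i) by rewrite -sum1_card big_mkcond.
rewrite (eq_bigr _ (fun i _ => cardD i)) exchange_big /= -sum1_card [X in _ <= X]big_mkcond /=.
apply: leq_sum => u _; case: (pickP (fun i => u \in D i)) => [i uDi | notD].
  have uA : u \in A by apply: subsetP (subDA i) u uDi.
  rewrite (bigD1 i) //= uDi uA big1 // => j ji.
  by case: (boolP (u \in D j)) => // /(disjD _ _ _ uDi) ij; rewrite ij eqxx in ji.
by rewrite big1 // => i _; rewrite notD.
Qed.

Section LeaveOneOut.
Variables (T I : finType) (S : {set T}) (F : I -> {set T}).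

Let U := S :|: \bigcup_i F i.
Let U_ i := S :|: \bigcup_(j | j != i) F j.

Lemma leave_one_out_sub i : U_ i \subset U.
Proof.
apply/subsetP => u; rewrite !inE => /orP[-> // | /bigcupP[j _ uFj]].
by apply/orP; right; apply/bigcupP; exists j.
Qed.

Lemma leave_one_out_gap i : U :\: U_ i \subset F i :\: S.
Proof.
apply/subsetP => u; rewrite !inE negb_or => /andP[/andP[uS uFi'] /orP[uS' | uF]].
  by rewrite uS' in uS.
case/bigcupP: uF => j _ uFj; case: (eqVneq j i) => [ji | ji].
  by rewrite -ji uFj uS.
by case/negP: uFi'; apply/bigcupP; exists j.
Qed.

Lemma leave_one_out_gap_disjoint i j u :
  u \in U :\: U_ i -> u \in U :\: U_ j -> i = j.
Proof.
move=> uUi uUj; apply/eqP; apply: contraTT uUi => ij.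
have /setDP[uFj _] : u \in F j :\: S by apply: subsetP (leave_one_out_gap j) u uUj.
have uUi : u \in U_ i by rewrite inE; apply/orP; right; apply/bigcupP; exists j; rewrite // eq_sym.
by rewrite inE uUi.
Qed.

Lemma card_leave_one_out_gap i : #|U| - #|U_ i| = #|U :\: U_ i|.
Proof. by rewrite cardsD (setIidPr (leave_one_out_sub i)). Qed.

Hypothesis F_new_le1 : forall i, #|F i :\: S| <= 1.

Lemma card_leave_one_out i : #|U| - #|U_ i| <= 1.
Proof.
by rewrite card_leave_one_out_gap (leq_trans (subset_leq_card (leave_one_out_gap i))).
Qed.

Lemma sum_card_leave_one_out : \sum_i (#|U| - #|U_ i|) <= #|U|.
Proof.
rewrite (eq_bigr _ (fun i _ => card_leave_one_out_gap i)).
by apply: sum_card_disjoint_le => [i | ]; [exact: subsetDl | exact: leave_one_out_gap_disjoint].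
Qed.

End LeaveOneOut.

Local Open Scope ring_scope.

Lemma self_bounding_card_setU (R : realFieldType) (T : finType) (X : Type)
    (m : nat) (S : {set T}) (C : 'I_m -> X -> {set T}) :
    (forall i a, (#|C i a :\: S| <= 1)%N) ->
  self_bounding (fun x : 'I_m -> X => #|S :|: \bigcup_i C i (x i)|%:R : R).
Proof.
move=> C_new_le1; split=> [x | ]; first exact: ler0n.
exists (fun i x => #|S :|: \bigcup_(j | j != i) C j (x j)|%:R).
split; [ | split].
- move=> i x y eq_xy; congr (#|S :|: _|%:R).
  by apply: eq_bigr => j /eq_xy ->.
- move=> x i; rewrite -natrB ?subset_leq_card ?leave_one_out_sub // ler0n lern1.
  exact: card_leave_one_out.
- move=> x; rewrite -(eq_bigr _ (fun i _ => natrB _ (subset_leq_card (leave_one_out_sub _ _ S _ i)))).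
  by rewrite -natr_sum ler_nat sum_card_leave_one_out.
Qed.

Section RoundProbability.
Variables (R : realFieldType) (V : finType) (e : rel V).

Lemma sum_choice_prob v : \sum_u choice_prob R e v u = 1.
Proof.
rewrite /choice_prob; case: eqP => [_ | nbhd_neq0].
  by rewrite (bigD1 v) //= eqxx big1 ?addr0 // => u /negbTE ->.
rewrite -mulr_suml.
have -> : \sum_u ((e v u)%:R : R) = #|nbhd e v|%:R.
  rewrite -sum1_card natr_sum [RHS]big_mkcond; apply: eq_bigr => u _.
  by rewrite inE; case: (e v u).
by rewrite mulfV // pnatr_eq0; apply/eqP.
Qed.

Lemma prob_forall_in (B : V -> {set V}) :
  prob R e [pred w : outcome V | [forall v, w v \in B v]]
  = \prod_v \sum_(u in B v) choice_prob R e v u.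
Proof.
rewrite bigA_distr_big_dep /prob /weight; apply: eq_bigl => w /=.
exact/forallP/familyP.
Qed.

Lemma prob_forall_enum_in (J : {set 'I_#|V|}) (A : 'I_#|V| -> {set V}) :
  prob R e [pred w : outcome V | [forall i in J, w (enum_val i) \in A i]]
  = \prod_(i in J) \sum_(u in A i) choice_prob R e (enum_val i) u.
Proof.
pose B v := if enum_rank v \in J then A (enum_rank v) else setT.
have -> : prob R e [pred w : outcome V | [forall i in J, w (enum_val i) \in A i]]
        = prob R e [pred w : outcome V | [forall v, w v \in B v]].
  apply: eq_bigl => w /=; apply/forall_inP/forallP => wA.
    move=> v; rewrite /B; case: ifP => [Jv | _]; last by rewrite inE.
    by have := wA _ Jv; rewrite enum_rankK.
  by move=> i Ji; have := wA (enum_val i); rewrite /B enum_valK Ji.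
rewrite prob_forall_in (bigID (fun v => enum_rank v \in J)) /=.
rewrite [X in _ * X]big1 ?mulr1 => [|v /negbTE notJv]; last first.
  by rewrite /B notJv -(sum_choice_prob v); apply: eq_bigl => u; rewrite inE.
rewrite (reindex (@enum_val _ V)) /=; last first.
  by exists (@enum_rank _) => x _; rewrite ?enum_valK ?enum_rankK.
apply: eq_big => i; first by rewrite enum_valK.
by rewrite /B enum_valK => ->.
Qed.

Lemma enum_coords_independent :
  mutually_independent R e (fun (i : 'I_#|V|) (w : outcome V) => w (enum_val i)).
Proof.
move=> J A; rewrite prob_forall_enum_in; apply: eq_bigr => i _.
have := prob_forall_enum_in [set i] A; rewrite big_set1 => <-.
apply: eq_bigl => w /=.
apply/forall_inP/idP => [wA | wA j]; first by apply: wA; rewrite inE.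
by rewrite inE => /eqP ->.
Qed.

End RoundProbability.

Definition informed_by {V : finType} (P : protocol) (S : {set V}) (v x : V)
    : {set V} :=
  let pushed := if v \in S then [set x] else set0 in
  let pulled := if x \in S then [set v] else set0 in
  match P with
  | Push => pushed
  | Pull => pulled
  | PushPull => pushed :|: pulled
  end.

Lemma informed_by_new_le1 (V : finType) (P : protocol) (S : {set V}) (v x : V) :
  (#|informed_by P S v x :\: S| <= 1)%N.
Proof.
have card_new_le1 (y : V) : (#|[set y] :\: S| <= 1)%N.
  by rewrite (leq_trans (subset_leq_card (subsetDl _ _))) ?cards1.
rewrite /informed_by; case: P; case: (boolP (v \in S)) => vS;
  case: (boolP (x \in S)) => xS; rewrite ?setU0 ?set0U ?set0D ?cards0 //.
suff -> : ([set x] :|: [set v]) :\: S = [set x] :\: S by [].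
by apply/setP => u; rewrite !inE; case: (eqVneq u v) => [-> | _]; rewrite ?vS ?orbF.
Qed.

Lemma next_informed_bigcup (V : finType) (P : protocol) (S : {set V})
    (w : outcome V) :
  next_informed P S w = S :|: \bigcup_v informed_by P S v (w v).
Proof.
apply/setP => u; case: P; rewrite /= !inE; congr (_ || _); apply/idP/bigcupP.
- by case/existsP => v /andP[vS /eqP <-]; exists v; rewrite // vS inE.
- by case=> v _; case: ifP => vS; rewrite inE // => /eqP ->; apply/existsP; exists v; rewrite vS eqxx.
- by move=> uS; exists u; rewrite // uS inE.
- by case=> v _; case: ifP => vS; rewrite inE // => /eqP ->.
- case/orP => [uS | /existsP[v /andP[vS /eqP <-]]].
    by exists u; rewrite // uS !inE eqxx orbT.
  by exists v; rewrite // vS !inE eqxx.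
- case=> v _; rewrite inE; case/orP; case: ifP => vS; rewrite inE // => /eqP ->.
    by apply/orP; right; apply/existsP; exists v; rewrite vS eqxx.
  by rewrite vS.
Qed.

Theorem lemma2p4 (R : realFieldType) (V : finType) (e : rel V)
    (e_sym : symmetric e) (e_irr : irreflexive e)
    (P : protocol) (S : {set V}) :
  exists (m : nat) (X : finType) (Xs : 'I_m -> outcome V -> X)
         (f : ('I_m -> X) -> R),
    mutually_independent R e Xs /\ self_bounding f /\
    forall w : outcome V, #|next_informed P S w|%:R = f (fun i => Xs i w).
Proof.
pose C (i : 'I_#|V|) := informed_by P S (enum_val i).
exists #|V|, V, (fun i w => w (enum_val i)),
  (fun x => #|S :|: \bigcup_i C i (x i)|%:R).
split; [exact: enum_coords_independent | split].
- by apply: self_bounding_card_setU => i a; apply: informed_by_new_le1.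
- by move=> w; rewrite next_informed_bigcup (big_enum_val (A := V)).
Qed.
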